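(* Let $r = pq$ with integers $p, q > 1$, and let $M$ be an $r \times r$ binary circulant matrix (over $\mathbb{F}_2$) with first row $\mathbf{c} = (c_0, c_1, \ldots, c_{r-1})$. Let $k$ be an integer. (1) If $c_{(k+pi) \bmod r} = 1$ for $i = 0, 1, \ldots, q-1$ and all other entries of $\mathbf{c}$ are $0$, then $\operatorname{rank}(M) = p$. (2) If $c_{(k+i) \bmod r} = 1$ for $i = 0, 1, \ldots, p-1$ and all other entries of $\mathbf{c}$ are $0$, then $\operatorname{rank}(M) = r - p + 1$. Here rank is taken over $\mathbb{F}_2$.
   Context: An $r\times r$ circulant matrix is one in which each row is the cyclic right shift by one position of the row above it; it is determined by its first row. *)

From mathcomp Require Import all_boot all_order all_algebra.
Set Implicit Arguments. Unset Strict Implicit. Unset Printing Implicit Defensive.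
Import GRing.Theory.
Local Open Scope ring_scope.

Definition circ_idx (n : nat) (i j : 'I_n) : 'I_n :=
  Ordinal (ltn_pmod (j + n - i)%N (leq_ltn_trans (leq0n i) (ltn_ord i))).

(* The n x n circulant matrix with first row c: each row is the cyclic right
   shift by one of the row above, i.e. M i j = c_{(j - i) mod n}. *)
Definition circulant (F : Type) (n : nat) (c : 'I_n -> F) : 'M[F]_n :=
  \matrix_(i, j) c (circ_idx i j).

(* All rows of the circulant are 0/1 vectors, and the argument
   works over any field.
   (1) The support of row i is the residue class of i + k modulo p, so row i
   only depends on i mod p and the rank is at most p; rows 0..p-1 restricted
   to the columns (b + k) mod n, b < p, form the identity matrix.
   (2) The support of row i is the cyclic window i + k, ..., i + k + p - 1.
   As p divides n, such a window meets every residue class modulo p exactly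
   once, so the circulant maps the indicator vector of every class to the
   all-ones vector; the p - 1 independent differences of these indicators lie
   in the kernel, whence rank <= n - p + 1.  Rows 0..n-p restricted to the
   columns (b + k + p - 1) mod n form a unitriangular matrix. *)

From mathcomp Require Import all_boot all_order all_algebra zify.
Import GRing.Theory Num.Theory.
Set Implicit Arguments.
Unset Strict Implicit.
Unset Printing Implicit Defensive.

Local Open Scope ring_scope.

Lemma mxrank_rowsub_le (F : fieldType) m m' n (f : 'I_m' -> 'I_m)
    (A : 'M[F]_(m, n)) :
  (\rank (rowsub f A) <= \rank A)%N.
Proof. by rewrite rowsubE mxrankM_maxr. Qed.

Lemma mxrank_ge_unitrig_submx (F : fieldType) m r s (M : 'M[F]_(r, s))
    (f : 'I_m -> 'I_r) (g : 'I_m -> 'I_s) :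
  (forall a b : 'I_m, (a <= b)%N -> M (f a) (g b) = (a == b)%:R) ->
  (m <= \rank M)%N.
Proof.
move=> M_unitrig.
have rk_sub : \rank (mxsub f g M) = m.
  apply: mxrank_unit; rewrite unitmxE det_trig; last first.
    apply/is_trig_mxP => a b ab; rewrite mxE M_unitrig; last exact: ltnW.
    by rewrite -(inj_eq val_inj) ltn_eqF.
  by rewrite big1 ?unitr1 // => a _; rewrite mxE M_unitrig ?eqxx.
rewrite -rk_sub -[M in mxsub _ _ M]mulmx1 mxsub_mul.
by apply: leq_trans (mxrankM_maxl _ _) (mxrank_rowsub_le _ _).
Qed.

Lemma mxrank_mulmx_eq0_le (F : fieldType) r s t (M : 'M[F]_(r, s))
    (Y : 'M_(s, t)) :
  M *m Y = 0 -> (\rank M + \rank Y <= s)%N.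
Proof.
move=> MY0.
have : (Y^T <= kermx M^T)%MS by apply/sub_kermxP; rewrite -trmx_mul MY0 trmx0.
move/mxrankS; rewrite mxrank_ker !mxrank_tr.
have := rank_leq_col M; lia.
Qed.

Lemma sumr_nat_card (R : nzSemiRingType) (I : finType) (P : pred I) :
  \sum_i (P i)%:R = #|P|%:R :> R.
Proof.
rewrite -sumr_const [RHS]big_mkcond /=.
by apply: eq_bigr => i _; rewrite unfold_in; case: (P i).
Qed.

Lemma circ_idxE n (i j : 'I_n) :
  (circ_idx i j)%:Z = ((j%:Z - i%:Z) %% n%:Z)%Z.
Proof.
rewrite /circ_idx /= -modz_nat.
have -> : ((j + n - i)%N : int) = j%:Z - i%:Z + n%:Z by have := ltn_ord i; lia.
by rewrite modzDr.
Qed.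

Lemma modz_dvd (d m n : int) :
  (d %| n)%Z -> ((m %% n)%Z %% d)%Z = (m %% d)%Z.
Proof. by case/dvdzP => e ->; rewrite {2}(divz_eq m (e * d)) mulrA modzMDl. Qed.

Lemma dvdz_small (d : nat) (x : int) :
  - d%:Z < x < d%:Z -> (d%:Z %| x)%Z = (x == 0).
Proof.
move=> /andP [x_gt x_lt].
apply/dvdz_mod0P/eqP => [x_mod | ->]; last exact: mod0z.
have [x_ge0 | x_lt0] := lerP 0 x.
  by move: x_mod; rewrite modz_small ?x_ge0.
have xp_small : 0 <= x + d%:Z < d%:Z by apply/andP; split; lia.
by move: x_mod; rewrite -modzDr modz_small // => xp0; lia.
Qed.

Section ModularOrdinal.

Variable n : nat.

Lemma eq_ord_modz (j : 'I_n) (x : int) :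
  (j%:Z == (x %% n%:Z)%Z) = (n%:Z %| j%:Z - x)%Z.
Proof.
by rewrite -eqz_mod_dvd [(j%:Z %% _)%Z]modz_small //; have := ltn_ord j; lia.
Qed.

Hypothesis n_gt0 : (0 < n)%N.

Lemma absz_modz_lt (x : int) : (`|(x %% n%:Z)%Z| < n)%N.
Proof. lia. Qed.

Definition ordz (x : int) : 'I_n := Ordinal (absz_modz_lt x).

Lemma ordzE (x : int) : (ordz x)%:Z = (x %% n%:Z)%Z.
Proof. rewrite /=; lia. Qed.

Lemma eq_ordz (j : 'I_n) (x : int) : (j == ordz x) = (n%:Z %| j%:Z - x)%Z.
Proof. by rewrite -eq_ord_modz -ordzE eqz_nat. Qed.

End ModularOrdinal.

Section ResidueArithmetic.

Variables p q : nat.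
Hypotheses (p_gt0 : (0 < p)%N) (q_gt0 : (0 < q)%N).
Local Notation n := (p * q)%N.

Lemma leq_p_n : (p <= n)%N.
Proof. by rewrite leq_pmulr. Qed.

Lemma pq_gt0 : (0 < n)%N.
Proof. by rewrite muln_gt0 p_gt0 q_gt0. Qed.

Lemma dvdz_p_n : (p%:Z %| n%:Z)%Z.
Proof. by rewrite PoszM dvdz_mulr. Qed.

Lemma dvdz_modz_n (x r : int) :
  (p%:Z %| (x %% n%:Z)%Z - r)%Z = (p%:Z %| x - r)%Z.
Proof.
have E : (((x %% n%:Z)%Z - r) %% p%:Z)%Z = ((x - r) %% p%:Z)%Z.
  by rewrite -modzDml modz_dvd ?dvdz_p_n // modzDml.
by apply/dvdz_mod0P/dvdz_mod0P; rewrite E.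
Qed.

Lemma exists_progression_modz (j : 'I_n) (k : int) :
  [exists i : 'I_q, (j%:Z == (k + (p * i)%:Z) %% (p * q)%:Z)%Z]
  = (p%:Z %| j%:Z - k)%Z.
Proof.
apply/existsP/idP => [[i /eqP ->] | /dvdzP [m jE]].
  by rewrite dvdz_modz_n addrAC subrr add0r PoszM dvdz_mulr.
have m_lt : (`|(m %% q%:Z)%Z| < q)%N by lia.
exists (Ordinal m_lt); rewrite eq_ord_modz /=.
have -> : j%:Z - (k + (p * `|(m %% q%:Z)%Z|)%N%:Z) = (m %/ q%:Z)%Z * n%:Z.
  by rewrite PoszM (divz_eq m q%:Z) in jE *; lia.
exact: dvdz_mull.
Qed.

Lemma exists_window_modz (j : 'I_n) (k : int) :
  [exists i : 'I_p, (j%:Z == (k + i%:Z) %% (p * q)%:Z)%Z]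
  = ((j%:Z - k) %% n%:Z < p%:Z)%Z.
Proof.
apply/existsP/idP => [[i /eqP ->] | w_lt].
  rewrite modzDml addrAC subrr add0r modz_small //;
    by have := ltn_ord i; have := leq_p_n; lia.
have i_lt : (`|((j%:Z - k) %% n%:Z)%Z| < p)%N by lia.
exists (Ordinal i_lt); rewrite eq_ord_modz /=.
have -> : j%:Z - (k + `|((j%:Z - k) %% n%:Z)%Z|%N%:Z)
          = (j%:Z - k) - ((j%:Z - k) %% n%:Z)%Z by lia.
by rewrite -eqz_mod_dvd modz_mod.
Qed.

Lemma card_window_class (y r : int) :
  #|[pred j : 'I_n | ((j%:Z - y) %% n%:Z < p%:Z)%Z && (p%:Z %| j%:Z - r)%Z]|
  = 1%N.
Proof.
pose s := ((r - y) %% p%:Z)%Z.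
apply: (@eq_card1 _ (ordz pq_gt0 (y + s))) => j; rewrite !inE eq_ordz.
have -> : j%:Z - (y + s) = (j%:Z - y) - s by lia.
have -> : j%:Z - r = (j%:Z - y) - (r - y) by lia.
rewrite -dvdz_modz_n -!eqz_mod_dvd -/s [(s %% _)%Z]modz_small; last first.
  by have := leq_p_n; lia.
set w := ((j%:Z - y) %% n%:Z)%Z.
have [w_lt | w_ge] := ltrP w p%:Z.
  by rewrite modz_small //; lia.
by apply/esym/negbTE; lia.
Qed.

End ResidueArithmetic.

Section CirculantRank.

Variables (F : fieldType) (p q : nat) (k : int).
Hypotheses (p_gt0 : (0 < p)%N) (q_gt0 : (0 < q)%N).
Local Notation n := (p * q)%N.
Local Notation ordn := (ordz (pq_gt0 p_gt0 q_gt0)).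
Variable c : 'I_n -> F.

Section ResidueClassSupport.

Hypothesis c_class : forall j : 'I_(p * q),
  c j = if [exists i : 'I_q, (j%:Z == (k + (p * i)%:Z) %% (p * q)%:Z)%Z]
        then 1 else 0.

Lemma circulant_class_entry (a b : 'I_n) :
  circulant c a b = (p%:Z %| b%:Z - (a%:Z + k))%Z%:R.
Proof.
rewrite mxE c_class exists_progression_modz // circ_idxE dvdz_modz_n //.
by rewrite opprD addrA; case: ifP.
Qed.

Lemma rank_circulant_class : \rank (circulant c) = p.
Proof.
apply/eqP; rewrite eqn_leq; apply/andP; split.
  pose N := rowsub (widen_ord (leq_p_n p q_gt0)) (circulant c).
  have -> : circulant c = rowsub (fun i => Ordinal (ltn_pmod i p_gt0)) N.
    apply/matrixP => i j.
    rewrite circulant_class_entry 2!mxE circulant_class_entry /=.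
    have -> : j%:Z - (i%:Z + k)
              = j%:Z - ((i %% p)%N%:Z + k) + (- (i %/ p)%N%:Z) * p%:Z.
      by have := divn_eq i p; lia.
    by rewrite rpredDr // dvdz_mull.
  exact: leq_trans (mxrank_rowsub_le _ _) (rank_leq_row _).
apply: (@mxrank_ge_unitrig_submx _ _ _ _ _
          (widen_ord (leq_p_n p q_gt0)) (fun b => ordn (b%:Z + k))).
move=> a b ab; rewrite circulant_class_entry ordzE dvdz_modz_n //.
have -> : b%:Z + k - (a%:Z + k) = b%:Z - a%:Z by lia.
rewrite dvdz_small; last by have := ltn_ord b; lia.
by rewrite -(inj_eq val_inj) /=; congr ((_ : bool)%:R); apply/eqP/eqP; lia.
Qed.

End ResidueClassSupport.

Section WindowSupport.

Hypothesis c_window : forall j : 'I_(p * q),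
  c j = if [exists i : 'I_p, (j%:Z == (k + i%:Z) %% (p * q)%:Z)%Z]
        then 1 else 0.

Lemma circulant_window_entry (a b : 'I_n) :
  circulant c a b = ((b%:Z - (a%:Z + k)) %% n%:Z < p%:Z)%Z%:R.
Proof.
rewrite mxE c_window exists_window_modz // circ_idxE modzDml.
by rewrite opprD addrA; case: ifP.
Qed.

Lemma circulant_mul_class (r : int) (a : 'I_n) :
  \sum_j circulant c a j * (p%:Z %| j%:Z - r)%Z%:R = 1.
Proof.
under eq_bigr => j _ do rewrite circulant_window_entry -natrM mulnb.
by rewrite sumr_nat_card card_window_class.
Qed.

Lemma rank_circulant_window : \rank (circulant c) = (n - p + 1)%N.
Proof.
apply/eqP; rewrite eqn_leq; apply/andP; split.
  pose Y : 'M[F]_(n, p.-1) :=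
    \matrix_(j, t) ((p%:Z %| j%:Z - t.+1%:Z)%Z%:R - (p%:Z %| j%:Z - 0)%Z%:R).
  have MY0 : circulant c *m Y = 0.
    apply/matrixP => a t; rewrite mxE [RHS]mxE.
    under eq_bigr => j _ do rewrite [Y _ _]mxE mulrBr.
    by rewrite sumrB !circulant_mul_class subrr.
  have rkY : (p.-1 <= \rank Y)%N.
    apply: (@mxrank_ge_unitrig_submx _ _ _ _ Y
              (fun t => ordn t.+1%:Z) id) => t u tu.
    rewrite mxE ordzE modz_small; last first.
      by have := ltn_ord t; have := leq_p_n p q_gt0; lia.
    rewrite subr0 !dvdz_small; try by have := ltn_ord t; have := ltn_ord u; lia.
    have -> : (t.+1%:Z == 0) = false by lia.
    rewrite /= subr0 -(inj_eq val_inj) /=.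
    by congr ((_ : bool)%:R); apply/eqP/eqP; lia.
  by have := mxrank_mulmx_eq0_le MY0; have := prednK p_gt0; lia.
have row_lt (a : 'I_(n - p + 1)) : (a < n)%N by have := ltn_ord a; lia.
apply: (@mxrank_ge_unitrig_submx _ _ _ _ _ (fun a => Ordinal (row_lt a))
          (fun b => ordn (b%:Z + k + p%:Z - 1))).
move=> a b ab; rewrite circulant_window_entry ordzE /= modzDml.
have -> : b%:Z + k + p%:Z - 1 - (a%:Z + k) = b%:Z + p%:Z - 1 - a%:Z by lia.
rewrite modz_small; last by have := ltn_ord b; have := leq_p_n p q_gt0; lia.
rewrite -(inj_eq val_inj) /=.
by congr ((_ : bool)%:R); apply/idP/idP => /eqP ?; lia.
Qed.

End WindowSupport.

End CirculantRank.

Theorem theorem3 (p q : nat) (hp : (1 < p)%N) (hq : (1 < q)%N) (k : int) :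
  (forall c : 'I_(p * q) -> 'F_2,
     (forall j : 'I_(p * q),
        c j = if [exists i : 'I_q,
                   (j%:Z == (k + (p * i)%:Z) %% (p * q)%:Z)%Z]
              then 1 else 0) ->
     \rank (circulant c) = p)
  /\
  (forall c : 'I_(p * q) -> 'F_2,
     (forall j : 'I_(p * q),
        c j = if [exists i : 'I_p,
                   (j%:Z == (k + i%:Z) %% (p * q)%:Z)%Z]
              then 1 else 0) ->
     \rank (circulant c) = (p * q - p + 1)%N).
Proof.
have p_gt0 : (0 < p)%N by apply: ltnW.
have q_gt0 : (0 < q)%N by apply: ltnW.
split=> c c_supp; [exact: rank_circulant_class | exact: rank_circulant_window].
Qed.
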